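(* Let $T$ be an $n$-vertex tournament with an optimal ordering $v_1,\ldots,v_n$, and let $B$ be the set of backwards edges in this ordering, with $|B|=\alpha n^2$. Suppose that the subset $B'\subseteq B$ of backwards edges of length at least $n/16$ satisfies $|B'|\ge \alpha n^2/4$. If $\alpha\le 2^{-16}$, then there exists $B''\subseteq B'$ with $|B''|\ge |B'|/2$ such that every edge of $B''$ lies in at least $n/64$ directed triangles of $T$.
   Context: Given an ordering $v_1,\ldots,v_n$ of the vertices of a tournament $T$, a backwards edge is an edge directed from $v_j$ to $v_i$ with $i<j$; its length is $j-i$. An ordering is optimal if it minimizes the number of backwards edges among all orderings of $V(T)$. A directed triangle is a set of three vertices $x,y,z$ with edges directed $x\to y$, $y\to z$, $z\to x$. *)

From HB Require Import structures.
From mathcomp Require Import all_boot all_order all_algebra.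
Set Implicit Arguments. Unset Strict Implicit. Unset Printing Implicit Defensive.

(* A tournament on a finite vertex type V: E x y means the edge is directed x -> y. *)
Definition is_tournament (V : finType) (E : rel V) : Prop :=
  (forall x, ~~ E x x) /\ (forall x y, x != y -> (E x y (+) E y x)).

(* An ordering v_1,...,v_n of V is an injective map f : 'I_n -> V with n = #|V|
   (0-based: v_{i+1} = f i). *)
Definition backward_edges (V : finType) (E : rel V) (n : nat) (f : 'I_n -> V)
  : {set 'I_n * 'I_n} :=
  [set p : 'I_n * 'I_n | (p.1 < p.2)%N && E (f p.2) (f p.1)].

Definition bedge_length (n : nat) (p : 'I_n * 'I_n) : nat := (p.2 - p.1)%N.

Definition optimal_ordering (V : finType) (E : rel V) (n : nat) (f : 'I_n -> V)
  : Prop :=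
  injective f /\
  forall g : 'I_n -> V, injective g ->
    (#|backward_edges E f| <= #|backward_edges E g|)%N.

Definition triangles_through (V : finType) (E : rel V) (x y : V) : nat :=
  #|[set z | E y z && E z x]|.

From HB Require Import structures.
From mathcomp Require Import all_boot all_order all_algebra.
From mathcomp Require Import zify lra.
Import Order.TTheory GRing.Theory Num.Theory.
Set Implicit Arguments. Unset Strict Implicit.

(* Let v_j -> v_i (i < j) be a backwards edge of an optimal ordering.  Moving v_i just after
   v_j, or v_j just before v_i, cannot decrease the number of backwards edges, so fewer than
   half of the vertices strictly between them send a backwards edge to v_i, and fewer than
   half receive one from v_j.  Every remaining inner vertex v_k has v_i -> v_k -> v_j and
   closes a directed triangle with the edge.  Hence if the edge is long (j - i >= n/16) but
   lies in fewer than n/64 triangles, both v_i and v_j carry more than n/64 backwards edges.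
   Since the backwards degrees sum to alpha n^2, at most 64 alpha n vertices do, so at most
   (64 alpha n)^2 <= alpha n^2 / 16 <= |B'| / 4 edges of B' lie in few triangles. *)

Lemma sum_eq_and (T : finType) (i : T) (c : T -> bool) :
  \sum_(k : T) ((k == i) && c k : nat) = c i.
Proof. by rewrite (bigD1 i) //= eqxx big1 ?addn0 // => k /negbTE ->. Qed.

Lemma sum_ord_between (N i j : nat) :
  \sum_(k < N) ((i < k < j) : nat) = minn N j - i.+1.
Proof.
elim: N => [|N IH]; first by rewrite big_ord0; lia.
by rewrite big_ord_recr /= IH; case: (ltnP i N); case: (ltnP N j) => /=; lia.
Qed.

Section Reordering.
Variables (V : finType) (E : rel V) (n : nat).

Lemma card_backward_edges (g : 'I_n -> V) :
  #|backward_edges E g| =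
  \sum_(a : 'I_n) \sum_(b : 'I_n) ((a < b) && E (g b) (g a) : nat).
Proof.
rewrite -sum1_card big_mkcond /= pair_big /=.
by apply: eq_bigr => -[a b] _; rewrite inE; case: ifP.
Qed.

(* The reordering [f \o s] places the vertex at position [a] at position [t a]. *)
Lemma optimal_ordering_le (f : 'I_n -> V) (s t : nat -> nat) :
  optimal_ordering E f ->
  (forall p, p < n -> s p < n) -> (forall p, p < n -> t (s p) = p) ->
  \sum_(a : 'I_n) \sum_(b : 'I_n) ((a < b) && E (f b) (f a) : nat) <=
  \sum_(a : 'I_n) \sum_(b : 'I_n) ((t a < t b) && E (f b) (f a) : nat).
Proof.
move=> [injf optf] s_lt sK.
pose sig (p : 'I_n) : 'I_n := insubd p (s p).
have tsig p : t (sig p) = p by rewrite val_insubd s_lt ?sK.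
have sig_inj : injective sig.
  by move=> p q /(congr1 (t \o val)) /=; rewrite !tsig => /val_inj.
have := optf _ (inj_comp injf sig_inj).
rewrite !card_backward_edges => /leq_trans; apply.
rewrite [leqRHS](reindex_inj sig_inj); apply/eq_leq/eq_bigr => a _.
by rewrite [RHS](reindex_inj sig_inj); apply: eq_bigr => b _ /=; rewrite !tsig.
Qed.

End Reordering.

Lemma card_backward_edges_flip (V : finType) (E : rel V) (n : nat) (g : 'I_n -> V) :
  #|backward_edges (fun x y => E y x) (g \o @rev_ord n)| = #|backward_edges E g|.
Proof.
rewrite !card_backward_edges exchange_big (reindex_inj rev_ord_inj).
apply: eq_bigr => a _; rewrite (reindex_inj rev_ord_inj).
apply: eq_bigr => b _ /=; rewrite !rev_ordK; congr andb.
by have := ltn_ord a; have := ltn_ord b; lia.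
Qed.

Lemma optimal_ordering_flip (V : finType) (E : rel V) (n : nat) (f : 'I_n -> V) :
  optimal_ordering E f -> optimal_ordering (fun x y => E y x) (f \o @rev_ord n).
Proof.
move=> [injf optf]; split=> [|g injg]; first exact: inj_comp injf rev_ord_inj.
have -> : backward_edges (fun x y => E y x) g =
          backward_edges (fun x y => E y x) ((g \o @rev_ord n) \o @rev_ord n).
  by apply/setP => p; rewrite !inE /= !rev_ordK.
by rewrite 2!card_backward_edges_flip; apply/optf/inj_comp/rev_ord_inj.
Qed.

(* Moving the vertex at position [i] to position [j] shifts those at [i+1 .. j] one step left. *)
Definition move_pos (i j a : nat) := if a == i then j else if i < a <= j then a.-1 else a.
Definition unmove_pos (i j p : nat) := if p == j then i else if i <= p < j then p.+1 else p.

Lemma move_posK (i j p : nat) : i < j -> move_pos i j (unmove_pos i j p) = p.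
Proof.
move=> lt_ij; rewrite /unmove_pos; case: (p =P j) => [->|?]; [|case: ifP => ?];
  by rewrite /move_pos; repeat case: ifP => ?; lia.
Qed.

Lemma move_pos_ltE (i j a b : nat) : i < j ->
  (a < b) + ((b == i) && (i < a <= j)) =
  (move_pos i j a < move_pos i j b) + ((a == i) && (i < b <= j)).
Proof. by move=> lt_ij; rewrite /move_pos; repeat case: ifP => ?; lia. Qed.

Lemma optimal_move_right (V : finType) (E : rel V) (n : nat) (f : 'I_n -> V)
  (i j : 'I_n) :
  optimal_ordering E f -> i < j ->
  \sum_(k : 'I_n) ((i < k <= j) && E (f k) (f i) : nat) <=
  \sum_(k : 'I_n) ((i < k <= j) && E (f i) (f k) : nat).
Proof.
move=> optf lt_ij; have [lt_in lt_jn] := (ltn_ord i, ltn_ord j).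
have unmove_lt p : p < n -> unmove_pos i j p < n.
  by rewrite /unmove_pos; repeat case: ifP => ?; lia.
have := optimal_ordering_le optf unmove_lt (fun p _ => move_posK p lt_ij).
suff : \sum_(a : 'I_n) \sum_(b : 'I_n) ((a < b) && E (f b) (f a) : nat) +
       \sum_(k : 'I_n) ((i < k <= j) && E (f i) (f k) : nat) =
       \sum_(a : 'I_n) \sum_(b : 'I_n)
         ((move_pos i j a < move_pos i j b) && E (f b) (f a) : nat) +
       \sum_(k : 'I_n) ((i < k <= j) && E (f k) (f i) : nat) by lia.
rewrite -[in LHS](eq_bigr _ (fun (a : 'I_n) _ =>
  sum_eq_and i (fun b => (i < a <= j) && E (f b) (f a)))).
rewrite -[in RHS](eq_bigr _ (fun (b : 'I_n) _ =>
  sum_eq_and i (fun a => (i < b <= j) && E (f b) (f a)))).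
rewrite [X in _ = _ + X]exchange_big -!big_split; apply: eq_bigr => a _.
rewrite -!big_split; apply: eq_bigr => b _ /=; rewrite -!val_eqE /=.
by case: (E _ _); rewrite ?andbT ?andbF ?addn0 ?move_pos_ltE.
Qed.

Lemma optimal_move_left (V : finType) (E : rel V) (n : nat) (f : 'I_n -> V)
  (i j : 'I_n) :
  optimal_ordering E f -> i < j ->
  \sum_(k : 'I_n) ((i <= k < j) && E (f j) (f k) : nat) <=
  \sum_(k : 'I_n) ((i <= k < j) && E (f k) (f j) : nat).
Proof.
move=> optf lt_ij; have [lt_in lt_jn] := (ltn_ord i, ltn_ord j).
have lt_rev : rev_ord j < rev_ord i by rewrite /=; lia.
have := optimal_move_right (optimal_ordering_flip optf) lt_rev.
rewrite (reindex_inj rev_ord_inj) [X in _ <= X -> _](reindex_inj rev_ord_inj) /=.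
have rev_between (k : 'I_n) : (n - j.+1 < n - k.+1 <= n - i.+1) = (i <= k < j).
  by have := ltn_ord k; lia.
under eq_bigr do rewrite rev_between !rev_ordK.
by under [X in _ <= X -> _]eq_bigr do rewrite rev_between !rev_ordK.
Qed.

Lemma sum_ord_ocE (n : nat) (i j : 'I_n) (c : 'I_n -> bool) : i < j ->
  \sum_(k : 'I_n) ((i < k <= j) && c k : nat) =
  \sum_(k : 'I_n) ((i < k < j) && c k : nat) + c j.
Proof.
move=> lt_ij; rewrite -(sum_eq_and j c) -big_split; apply: eq_bigr => k _ /=.
case: (k =P j) => [->|/eqP ne_kj]; first by rewrite lt_ij leqnn ltnn.
by rewrite addn0 [k < j]ltn_neqAle (ne_kj : val k != j).
Qed.

Lemma sum_ord_coE (n : nat) (i j : 'I_n) (c : 'I_n -> bool) : i < j ->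
  \sum_(k : 'I_n) ((i <= k < j) && c k : nat) =
  \sum_(k : 'I_n) ((i < k < j) && c k : nat) + c i.
Proof.
move=> lt_ij; rewrite -(sum_eq_and i c) -big_split; apply: eq_bigr => k _ /=.
case: (k =P i) => [->|/eqP ne_ki]; first by rewrite lt_ij leqnn ltnn.
by rewrite addn0 [i < k]ltn_neqAle eq_sym (ne_ki : val k != i).
Qed.

Section BackwardEdge.
Variables (V : finType) (E : rel V) (n : nat) (f : 'I_n -> V).
Hypotheses (tourE : is_tournament E) (optf : optimal_ordering E f).

Definition back_in_degree (x : 'I_n) := \sum_(k : 'I_n) ((x < k) && E (f k) (f x) : nat).
Definition back_out_degree (x : 'I_n) := \sum_(k : 'I_n) ((k < x) && E (f x) (f k) : nat).

Lemma sum_back_in_degree : \sum_x back_in_degree x = #|backward_edges E f|.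
Proof. by rewrite card_backward_edges. Qed.

Lemma sum_back_out_degree : \sum_x back_out_degree x = #|backward_edges E f|.
Proof. by rewrite card_backward_edges exchange_big. Qed.

Lemma tournament_ord_xor (k l : 'I_n) : k != l -> E (f k) (f l) (+) E (f l) (f k).
Proof. by move=> ne_kl; apply: (proj2 tourE); rewrite (inj_eq (proj1 optf)). Qed.

Variables (i j : 'I_n).
Hypotheses (lt_ij : i < j) (Eji : E (f j) (f i)).

Definition inner_back_in := \sum_(k : 'I_n) ((i < k < j) && E (f k) (f i) : nat).
Definition inner_back_out := \sum_(k : 'I_n) ((i < k < j) && E (f j) (f k) : nat).

Lemma Eij_false : E (f i) (f j) = false.
Proof.
have ne_ij : i != j by rewrite -val_eqE neq_ltn lt_ij.
by have := tournament_ord_xor ne_ij; rewrite Eji; case: (E _ _).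
Qed.

Lemma sum_inner : \sum_(k : 'I_n) ((i < k < j) : nat) = j - i.+1.
Proof. by rewrite sum_ord_between; have := ltn_ord j; lia. Qed.

Lemma sum_inner_xor (g h : 'I_n -> bool) : (forall k : 'I_n, i < k < j -> g k (+) h k) ->
  \sum_(k : 'I_n) ((i < k < j) && g k : nat) +
  \sum_(k : 'I_n) ((i < k < j) && h k : nat) = j - i.+1.
Proof.
move=> gh; rewrite -sum_inner -big_split; apply: eq_bigr => k _.
case: (boolP (i < k < j)) => //= /gh.
by case: (g k); case: (h k).
Qed.

Lemma inner_back_in_bound : 2 * inner_back_in + 1 <= j - i.+1.
Proof.
have xor_i (k : 'I_n) : i < k < j -> E (f k) (f i) (+) E (f i) (f k).
  by case/andP=> lt_ik _; apply: tournament_ord_xor; rewrite -val_eqE neq_ltn lt_ik orbT.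
have := sum_inner_xor xor_i.
have := optimal_move_right optf lt_ij; rewrite !sum_ord_ocE // Eji Eij_false addn0.
rewrite /inner_back_in; lia.
Qed.

Lemma inner_back_out_bound : 2 * inner_back_out + 1 <= j - i.+1.
Proof.
have xor_j (k : 'I_n) : i < k < j -> E (f j) (f k) (+) E (f k) (f j).
  by case/andP=> _ lt_kj; apply: tournament_ord_xor; rewrite -val_eqE neq_ltn lt_kj orbT.
have := sum_inner_xor xor_j.
have := optimal_move_left optf lt_ij; rewrite !sum_ord_coE // Eji Eij_false addn0.
rewrite /inner_back_out; lia.
Qed.

Lemma inner_le_triangles :
  j - i.+1 <= triangles_through E (f j) (f i) + inner_back_in + inner_back_out.
Proof.
have triangles_ge : \sum_(k : 'I_n) ((i < k < j) && E (f i) (f k) && E (f k) (f j) : nat)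
    <= triangles_through E (f j) (f i).
  rewrite [X in X <= _](_ : _ =
      #|[set k : 'I_n | (i < k < j) && E (f i) (f k) && E (f k) (f j)]|);
    last by rewrite -sum1dep_card [RHS]big_mkcond.
  rewrite -(card_imset _ (proj1 optf)); apply/subset_leq_card/subsetP => z /imsetP[k].
  by rewrite !inE => /andP[/andP[_ Eik] Ekj] ->; rewrite Eik Ekj.
apply: leq_trans (leq_add (leq_add triangles_ge (leqnn _)) (leqnn _)).
rewrite -sum_inner /inner_back_in /inner_back_out -!big_split; apply: leq_sum => k _ /=.
case: (boolP (i < k < j)) => //= /andP[lt_ik lt_kj].
have /tournament_ord_xor : k != i by rewrite -val_eqE neq_ltn lt_ik orbT.
have /tournament_ord_xor : k != j by rewrite -val_eqE neq_ltn lt_kj.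
by case: (E (f k) (f i)); case: (E (f i) (f k)); case: (E (f k) (f j)); case: (E (f j) (f k)).
Qed.

Local Open Scope ring_scope.

Lemma few_triangles_heavy_ends (R : realFieldType) :
  n%:R / 16 <= (j - i)%N%:R :> R ->
  (triangles_through E (f j) (f i))%:R < n%:R / 64 :> R ->
  n%:R / 64 < (back_in_degree i)%:R :> R /\ n%:R / 64 < (back_out_degree j)%:R :> R.
Proof.
have in_le : (inner_back_in <= back_in_degree i)%N.
  by apply: leq_sum => k _; case: (i < k)%N; case: (k < j)%N.
have out_le : (inner_back_out <= back_out_degree j)%N.
  by apply: leq_sum => k _; case: (i < k)%N; case: (k < j)%N.
have := inner_back_in_bound; have := inner_back_out_bound; have := inner_le_triangles.
have -> : (j - i = (j - i.+1).+1)%N by lia.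
move: in_le out_le; rewrite -!(ler_nat R) !natrD -natr1.
lra.
Qed.

End BackwardEdge.

Local Open Scope ring_scope.

Lemma card_gt_mul_le_sum (T : finType) (R : numDomainType) (F : T -> nat) (c : R) :
  #|[set x | c < (F x)%:R]|%:R * c <= (\sum_x F x)%:R.
Proof.
rewrite natr_sum mulr_natl -sumr_const.
apply: (@le_trans _ _ (\sum_(x in [set x | c < (F x)%:R]) (F x)%:R)).
  by apply: ler_sum => x; rewrite inE => /ltW.
by rewrite [leRHS](bigID [in [set x | c < (F x)%:R]]) /= lerDl sumr_ge0.
Qed.

Lemma heavy_pairs_le (R : realFieldType) (N a h1 h2 : R) :
  0 <= h1 <= N -> 0 <= h2 -> 0 <= a * N ^+ 2 -> a <= (2 ^+ 16)^-1 ->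
  h1 * (N / 64) <= a * N ^+ 2 -> h2 * (N / 64) <= a * N ^+ 2 ->
  h1 * h2 <= a * N ^+ 2 / 16.
Proof.
move=> /andP[h1_ge0 h1_le] h2_ge0 dens_ge0 small_a heavy1 heavy2.
have [N_le0|N_gt0] := lerP N 0.
  have -> : h1 = 0 by lra.
  by rewrite mul0r; lra.
have a_ge0 : 0 <= a by rewrite -(pmulr_lge0 _ (exprn_gt0 2 N_gt0)).
have h1_le' : h1 <= 64 * a * N by rewrite -(ler_pM2r N_gt0); rewrite expr2 in heavy1; lra.
have h2_le' : h2 <= 64 * a * N by rewrite -(ler_pM2r N_gt0); rewrite expr2 in heavy2; lra.
apply: (le_trans (ler_pM h1_ge0 h2_ge0 h1_le' h2_le')).
by rewrite expr2 in small_a *; nra.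
Qed.

Theorem mainTheorem4 (V : finType) (E : rel V) (n : nat) (f : 'I_n -> V)
  (alpha : rat) (B' : {set 'I_n * 'I_n}) :
  is_tournament E ->
  #|V| = n ->
  optimal_ordering E f ->
  (#|backward_edges E f|)%:R = alpha * (n%:R) ^+ 2 ->
  B' = [set p in backward_edges E f | (n%:R / 16%:R <= (bedge_length p)%:R :> rat)] ->
  alpha * (n%:R) ^+ 2 / 4%:R <= (#|B'|)%:R ->
  alpha <= (2%:R ^+ 16)^-1 ->
  exists B'' : {set 'I_n * 'I_n},
    [/\ B'' \subset B',
        (#|B'|)%:R / 2%:R <= (#|B''|)%:R :> rat
      & forall p, p \in B'' ->
          n%:R / 64%:R <= (triangles_through E (f p.2) (f p.1))%:R :> rat].
Proof.
move=> tourE _ optf cardB defB' largeB' small_alpha.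
pose P := [set p : 'I_n * 'I_n | n%:R / 64 <= (triangles_through E (f p.2) (f p.1))%:R :> rat].
exists (B' :&: P); split => [||p]; [exact: subsetIl| |by rewrite !inE => /andP[]].
pose H1 := [set x | n%:R / 64 < (back_in_degree E f x)%:R :> rat].
pose H2 := [set x | n%:R / 64 < (back_out_degree E f x)%:R :> rat].
have bad_sub : B' :\: P \subset setX H1 H2.
  apply/subsetP => -[i j]; rewrite defB' !inE /= -ltNge.
  case/andP=> few /andP[/andP[lt_ij Eji] long].
  by have [-> ->] := few_triangles_heavy_ends tourE optf lt_ij Eji long few.
have card_bad : #|B' :\: P|%:R <= #|H1|%:R * #|H2|%:R :> rat.
  by rewrite -natrM ler_nat -cardsX subset_leq_card.
have card_le_n (H : {set 'I_n}) : 0 <= (#|H|%:R : rat) <= n%:R.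
  by rewrite ler0n ler_nat -[n in (_ <= n)%N]card_ord max_card.
have heavy1 : #|H1|%:R * (n%:R / 64) <= alpha * n%:R ^+ 2.
  by rewrite -cardB -sum_back_in_degree; apply: card_gt_mul_le_sum.
have heavy2 : #|H2|%:R * (n%:R / 64) <= alpha * n%:R ^+ 2.
  by rewrite -cardB -sum_back_out_degree; apply: card_gt_mul_le_sum.
have dens_ge0 : 0 <= alpha * n%:R ^+ 2 by rewrite -cardB.
have := heavy_pairs_le (card_le_n H1) (proj1 (andP (card_le_n H2)))
  dens_ge0 small_alpha heavy1 heavy2.
have : #|B' :&: P|%:R + #|B' :\: P|%:R = #|B'|%:R :> rat by rewrite -natrD cardsID.
lra.
Qed.
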